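(* Let $E$ be a finite set and let $\nu\colon 2^E\to\mathbb{R}\cup\{-\infty\}$ be an $\mathrm{M}^\natural$-concave function with $\nu(S)\ne-\infty$ for every $S\subseteq E$ with $|S|\le 2$. Then for any $0<q\le1$, the function \[ d(i,j)=\begin{cases}2q^{-\nu(\{i,j\})+\nu(\{i\})+\nu(\{j\})-\nu(\varnothing)}, & i\ne j,\\ 0,& i=j,\end{cases} \] is an ultrametric on $E$ of radius at most $1$, i.e. $d(i,j)\le\max\{d(i,k),d(k,j)\}$ for all $i,j,k\in E$ and $d(i,j)\le 2$ for all $i,j\in E$.
   Context: A function $\nu\colon 2^E\to\mathbb{R}\cup\{-\infty\}$ is $\mathrm{M}^\natural$-concave if for any $I_1,I_2\subseteq E$ and $i_1\in I_1\setminus I_2$, either $\nu(I_1)+\nu(I_2)\le \nu(I_1\setminus i_1)+\nu(I_2\cup i_1)$, or there is $i_2\in I_2\setminus I_1$ with $\nu(I_1)+\nu(I_2)\le \nu((I_1\setminus i_1)\cup i_2)+\nu((I_2\setminus i_2)\cup i_1)$. The radius of an ultrametric is half its diameter (maximum distance). *)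

From HB Require Import structures.
From mathcomp Require Import all_boot all_order all_algebra.
From mathcomp Require Import boolp reals.
From mathcomp Require Import ereal exp.
Set Implicit Arguments. Unset Strict Implicit. Unset Printing Implicit Defensive.
Import Order.TTheory GRing.Theory Num.Theory.
Local Open Scope ring_scope.
Local Open Scope ereal_scope.

(* A set function nu : 2^E -> R ∪ {-oo} is represented as nu : {set E} -> \bar R
   together with the requirement that nu never takes the value +oo. *)
Definition valued_in_R_minfty (R : realType) (E : finType) (nu : {set E} -> \bar R) :=
  forall S : {set E}, nu S != +oo.

Definition Mnat_concave (R : realType) (E : finType) (nu : {set E} -> \bar R) :=
  forall (I1 I2 : {set E}) (i1 : E), i1 \in I1 :\: I2 ->
    (nu I1 + nu I2 <= nu (I1 :\ i1) + nu (i1 |: I2))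
    \/ exists2 i2, i2 \in I2 :\: I1 &
         nu I1 + nu I2 <= nu (i2 |: (I1 :\ i1)) + nu (i1 |: (I2 :\ i2)).

Local Close Scope ereal_scope.

(* The distance d(i,j) = 2 q^{-nu({i,j}) + nu({i}) + nu({j}) - nu(∅)} for i != j,
   and 0 for i = j.  `fine` extracts the real value (all involved values are
   finite by hypothesis). *)
Definition dist_nu (R : realType) (E : finType) (nu : {set E} -> \bar R) (q : R)
    (i j : E) : R :=
  if i == j then 0
  else 2 * q `^ (- fine (nu [set i; j]) + fine (nu [set i]) + fine (nu [set j])
                 - fine (nu (set0 : {set E}))).

From HB Require Import structures.
From mathcomp Require Import all_boot all_order all_algebra.
From mathcomp Require Import boolp reals.
From mathcomp Require Import ereal exp.
From mathcomp Require Import lra.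
Import Order.TTheory GRing.Theory Num.Theory.
Local Open Scope ring_scope.

(* Write d(i,j) = 2 q^e(i,j) for i != j.  Exchanging i out of {i,j} against
   the empty set shows e(i,j) >= 0, so d <= 2 because q <= 1.  Exchanging i
   out of {i,j} against {k} gives e(i,j) >= e(i,k) or e(i,j) >= e(k,j); as
   q^x is nonincreasing in x, this is the ultrametric inequality. *)

Section MnatConcaveExchange.
Local Open Scope ereal_scope.
Context {R : realType} {E : finType} {nu : {set E} -> \bar R}.
Hypothesis nu_concave : Mnat_concave nu.

Lemma Mnat_concave_pair (i j : E) : i != j ->
  nu [set i; j] + nu set0 <= nu [set i] + nu [set j].
Proof.
move=> ij; have i_in : i \in [set i; j] :\: set0 by rewrite setD0 !inE eqxx.
case: (nu_concave _ _ _ i_in) => [|[i2]]; last by rewrite set0D inE.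
by rewrite setU1K ?inE // setU0 [nu [set i] + _]addeC.
Qed.

Lemma Mnat_concave_triple (i j k : E) : i != j -> i != k -> k != j ->
  nu [set i; j] + nu [set k] <= nu [set j] + nu [set i; k]
  \/ nu [set i; j] + nu [set k] <= nu [set k; j] + nu [set i].
Proof.
move=> ij ik kj; have i_in : i \in [set i; j] :\: [set k].
  by rewrite !inE eqxx (negbTE ik).
case: (nu_concave _ _ _ i_in) => [|[i2]]; first by rewrite setU1K ?inE //; left.
rewrite !inE => /andP[_ /eqP ->].
by rewrite setU1K ?inE // setDv setU0; right.
Qed.

End MnatConcaveExchange.

Definition dist_exponent {R : realType} {E : finType} (nu : {set E} -> \bar R)
    (i j : E) : R :=
  - fine (nu [set i; j]) + fine (nu [set i]) + fine (nu [set j])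
  - fine (nu (set0 : {set E})).

Section DistExponent.
Variables (R : realType) (E : finType) (nu : {set E} -> \bar R).

Lemma dist_exponentC (i j : E) : dist_exponent nu i j = dist_exponent nu j i.
Proof. by rewrite /dist_exponent setUC; congr (_ - _); rewrite addrAC. Qed.

Hypothesis nu_real : valued_in_R_minfty nu.
Hypothesis nu_concave : Mnat_concave nu.
Hypothesis nu_small_finite : forall S : {set E}, (#|S| <= 2)%N -> nu S != -oo%E.

Lemma nu_small_fineK (S : {set E}) : (#|S| <= 2)%N -> nu S = (fine (nu S))%:E.
Proof. by move=> S2; rewrite fineK // fin_numE nu_small_finite // nu_real. Qed.

Let nu0E : nu set0 = (fine (nu set0))%:E.
Proof. by rewrite nu_small_fineK ?cards0. Qed.

Let nu1E (i : E) : nu [set i] = (fine (nu [set i]))%:E.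
Proof. by rewrite nu_small_fineK ?cards1. Qed.

Let nu2E (i j : E) : nu [set i; j] = (fine (nu [set i; j]))%:E.
Proof. by rewrite nu_small_fineK // cards2; case: (i != j). Qed.

Lemma dist_exponent_ge0 (i j : E) : i != j -> 0 <= dist_exponent nu i j.
Proof.
move=> /(Mnat_concave_pair nu_concave i j).
by rewrite nu2E nu0E (nu1E i) (nu1E j) -!EFinD lee_fin /dist_exponent; lra.
Qed.

Lemma dist_exponent_ultra (i j k : E) : i != j -> i != k -> k != j ->
  dist_exponent nu i k <= dist_exponent nu i j
  \/ dist_exponent nu k j <= dist_exponent nu i j.
Proof.
move=> ij ik kj; rewrite /dist_exponent.
case: (Mnat_concave_triple nu_concave i j k ij ik kj);
  rewrite (nu2E i j) (nu2E i k) (nu2E k j) (nu1E i) (nu1E j) (nu1E k)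
    -!EFinD lee_fin => ?; [left | right]; lra.
Qed.

End DistExponent.

Section DistNu.
Variables (R : realType) (E : finType) (nu : {set E} -> \bar R) (q : R).

Lemma dist_nu_id (i : E) : dist_nu nu q i i = 0.
Proof. by rewrite /dist_nu eqxx. Qed.

Lemma dist_nuE (i j : E) : i != j ->
  dist_nu nu q i j = 2 * q `^ dist_exponent nu i j.
Proof. by rewrite /dist_nu => /negbTE ->. Qed.

Lemma dist_nuC (i j : E) : dist_nu nu q i j = dist_nu nu q j i.
Proof.
have [->|ij] := eqVneq i j; first by [].
by rewrite !dist_nuE 1?dist_exponentC // eq_sym.
Qed.

Lemma dist_nu_ge0 (i j : E) : 0 <= dist_nu nu q i j.
Proof.
have [->|ij] := eqVneq i j; first by rewrite dist_nu_id.
by rewrite dist_nuE // mulr_ge0 // powR_ge0.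
Qed.

Hypothesis q_gt0 : 0 < q.

Lemma dist_nu_gt0 (i j : E) : i != j -> 0 < dist_nu nu q i j.
Proof. by move=> ij; rewrite dist_nuE // mulr_gt0 // powR_gt0. Qed.

Hypothesis q_le1 : q <= 1.

Let q_unit : 0 < q <= 1. Proof. by rewrite q_gt0 q_le1. Qed.

Lemma dist_nu_le2 (i j : E) : (i != j -> 0 <= dist_exponent nu i j) ->
  dist_nu nu q i j <= 2.
Proof.
move=> e_ge0; have [->|ij] := eqVneq i j; first by rewrite dist_nu_id.
rewrite dist_nuE // -[leRHS]mulr1 ler_pM2l //.
by rewrite -(powRr0 q) (ger_powR q_unit) ?e_ge0.
Qed.

Lemma dist_nu_ultra (i j k : E) :
  (i != j -> i != k -> k != j ->
     dist_exponent nu i k <= dist_exponent nu i j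
     \/ dist_exponent nu k j <= dist_exponent nu i j) ->
  dist_nu nu q i j <= Num.max (dist_nu nu q i k) (dist_nu nu q k j).
Proof.
move=> e_ultra.
have [->|ij] := eqVneq i j; first by rewrite dist_nu_id le_max dist_nu_ge0.
have [<-|ik] := eqVneq i k; first by rewrite le_max lexx orbT.
have [->|kj] := eqVneq k j; first by rewrite le_max lexx.
rewrite !dist_nuE // le_max !ler_pM2l //.
by case: (e_ultra ij ik kj) => /(ger_powR q_unit) ->; rewrite ?orbT.
Qed.

End DistNu.

Theorem lemma3p3 (R : realType) (E : finType) (nu : {set E} -> \bar R)
  (Hval : valued_in_R_minfty nu) (Hconc : Mnat_concave nu)
  (Hfin : forall S : {set E}, (#|S| <= 2)%N -> nu S != -oo%E)
  (q : R) (hq0 : 0 < q) (hq1 : q <= 1) :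
  [/\ (forall i : E, dist_nu nu q i i = 0),
      (forall i j : E, i != j -> 0 < dist_nu nu q i j),
      (forall i j : E, dist_nu nu q i j = dist_nu nu q j i),
      (forall i j k : E, dist_nu nu q i j <= Num.max (dist_nu nu q i k) (dist_nu nu q k j))
    & (forall i j : E, dist_nu nu q i j <= 2)].
Proof.
split.
- exact: dist_nu_id.
- exact: dist_nu_gt0.
- exact: dist_nuC.
- move=> i j k; apply: dist_nu_ultra => //.
  exact: dist_exponent_ultra.
- move=> i j; apply: dist_nu_le2 => //.
  exact: dist_exponent_ge0.
Qed.
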